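(* Let $\mathcal F$ be the family of all graphs on fewer than $25$ vertices with density $e(F)/v(F)>10/7$, and let $G$ be a $(K_3,1)$-stable graph that contains no member of $\mathcal F$ as a subgraph. Then every connected component of $G$ is isomorphic either to $TT$ or to $DD$.
   Context: With respect to a graph $G$: a bad vertex (bad edge) is a vertex (edge) of $G$ lying in no triangle of $G$; a bad pair is a set $\{u,v\}\subseteq V(G)$ of two vertices such that no triangle of $G$ contains exactly one of $u,v$; a small component is a connected component with at most $4$ vertices. $G$ is $(K_3,1)$-stable if it has no bad vertex, no bad edge, no bad pair and no small component. $TT$ is the graph on $v_1,\dots,v_5$ with edges $v_1v_2,v_1v_3,v_2v_3,v_2v_4,v_3v_4,v_3v_5,v_4v_5$. $DD$ is the graph on $x,y_1,z_1,z_2,y_2,z_3,z_4$ with edges $xy_1,xz_1,xz_2,y_1z_1,y_1z_2,xy_2,xz_3,xz_4,y_2z_3,y_2z_4$. *)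

From mathcomp Require Import all_boot.
Set Implicit Arguments. Unset Strict Implicit. Unset Printing Implicit Defensive.

Definition simple_graph (T : finType) (e : rel T) : Prop :=
  symmetric e /\ irreflexive e.

Definition in_triangle (T : finType) (e : rel T) (v : T) : Prop :=
  exists b c, [&& e v b, e v c & e b c].

Definition bad_vertex (T : finType) (e : rel T) (v : T) : Prop :=
  ~ in_triangle e v.

Definition bad_edge (T : finType) (e : rel T) (u v : T) : Prop :=
  e u v /\ ~ (exists w, e u w && e v w).

Definition tri_with_without (T : finType) (e : rel T) (u v : T) : Prop :=
  exists b c, [&& e u b, e u c, e b c, b != v & c != v].

Definition bad_pair (T : finType) (e : rel T) (u v : T) : Prop :=
  u != v /\ ~ tri_with_without e u v /\ ~ tri_with_without e v u.

Definition component (T : finType) (e : rel T) (x : T) : {set T} :=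
  [set y | connect e x y].

Definition small_component (T : finType) (e : rel T) (x : T) : Prop :=
  #|component e x| <= 4.

Definition K3_1_stable (T : finType) (e : rel T) : Prop :=
  (forall v, ~ bad_vertex e v) /\
  (forall u v, ~ bad_edge e u v) /\
  (forall u v, ~ bad_pair e u v) /\
  (forall x, ~ small_component e x).

Definition num_edges (n : nat) (H : rel 'I_n) : nat :=
  #|[set p : 'I_n * 'I_n | (p.1 < p.2) && H p.1 p.2]|.

Definition contains_subgraph (T : finType) (e : rel T) (n : nat) (H : rel 'I_n) : Prop :=
  exists f : 'I_n -> T, injective f /\ (forall i j, H i j -> e (f i) (f j)).

Definition induced_iso (T : finType) (e : rel T) (S : {set T}) (n : nat) (H : rel 'I_n) : Prop :=
  exists f : 'I_n -> T, injective f /\ (forall y, y \in S <-> exists i, f i = y)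
    /\ (forall i j, e (f i) (f j) = H i j).

Definition sym_of (n : nat) (l : seq (nat * nat)) : rel 'I_n :=
  fun i j => ((nat_of_ord i, nat_of_ord j) \in l) || ((nat_of_ord j, nat_of_ord i) \in l).

(* TT: v1..v5 as 0..4 *)
Definition TT : rel 'I_5 :=
  @sym_of 5 [:: (0,1); (0,2); (1,2); (1,3); (2,3); (2,4); (3,4)].

(* DD: x=0, y1=1, z1=2, z2=3, y2=4, z3=5, z4=6 *)
Definition DD : rel 'I_7 :=
  @sym_of 7 [:: (0,1); (0,2); (0,3); (1,2); (1,3); (0,4); (0,5); (0,6); (4,5); (4,6)].

From mathcomp Require Import all_boot zify.
From Stdlib Require Import Classical.
Set Implicit Arguments. Unset Strict Implicit. Unset Printing Implicit Defensive.

(* Writing [degsum S] for twice the number of edges induced by a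
   vertex set [S], the excluded subgraphs say exactly that
   [7 * degsum S <= 20 * #|S|] whenever [#|S| < 25] (lemma [sparse]).
   Stability is used in two ways: every edge lies in a triangle, so a set
   that is not a union of components can be left along a triangle; and a
   closed set never contains two vertices locked to each other (every
   triangle through one contains the other), as they would form a bad pair.
   The engine is [growth_false]: if every non-closed set with some invariant
   can be enlarged by a pendant triangle keeping the invariant and creating a
   free pair, then no such set exists, since after a bounded number of steps
   the set is either closed with a bad pair or too dense.  With the invariant
   "no edge near [x] lies in two triangles" this shows that every component
   contains a diamond ([diamond_near]); with a density surplus it shows that
   small sets with surplus are components ([surplus_closed]).  From the
   diamond, one or two growth steps are forced, and the resulting component
   on 5 or 7 vertices is identified with TT or DD by explicit enumeration,
   all other configurations containing a bad pair. *)

Lemma num_edges_double n (H : rel 'I_n) : symmetric H -> irreflexive H ->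
  2 * num_edges H = \sum_i \sum_j H i j.
Proof.
move=> sH iH.
have below : num_edges H = \sum_(i : 'I_n) \sum_(j : 'I_n) ((i < j) && H i j).
  rewrite /num_edges -sum1_card pair_bigA /= big_mkcond /=.
  by apply: eq_bigr => p _; rewrite inE; case: (_ && _).
have above : num_edges H = \sum_(i : 'I_n) \sum_(j : 'I_n) ((j < i) && H i j).
  rewrite below exchange_big /=; apply: eq_bigr => i _; apply: eq_bigr => j _.
  by rewrite sH.
rewrite mul2n -addnn {1}below above -big_split /=; apply: eq_bigr => i _.
rewrite -big_split /=; apply: eq_bigr => j _.
case: (ltngtP i j) => [_|_|/val_inj ->].
- by rewrite addn0.
- by rewrite add0n.
- by rewrite iH andbF.
Qed.

Section StableGraph.

Variables (T : finType) (e : rel T).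
Hypothesis e_sym : symmetric e.
Hypothesis e_irr : irreflexive e.

Lemma edge_sym u v : e u v -> e v u.
Proof. by rewrite e_sym. Qed.

Lemma edge_neq u v : e u v -> u != v.
Proof. by apply: contraTneq => ->; rewrite e_irr. Qed.

Definition deg (S : {set T}) (v : T) : nat := \sum_(y in S) e v y.
Definition degsum (S : {set T}) : nat := \sum_(u in S) deg S u.

Lemma deg_setU1 (S : {set T}) v u : v \notin S -> deg (v |: S) u = e u v + deg S u.
Proof. by move=> vS; rewrite /deg big_setU1. Qed.

Lemma degsum_setU1 (S : {set T}) v : v \notin S ->
  degsum (v |: S) = degsum S + 2 * deg S v.
Proof.
move=> vS; rewrite /degsum big_setU1 //= deg_setU1 // e_irr add0n.
rewrite (eq_bigr (fun u => e v u + deg S u)); last by move=> u _; rewrite deg_setU1 // e_sym.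
by rewrite big_split /= -/(deg S v); lia.
Qed.

Lemma deg_card (S : {set T}) v : deg S v = #|[set y in S | e v y]|.
Proof.
rewrite /deg -sum1_card [RHS]big_mkcond [LHS]big_mkcond /=.
by apply: eq_bigr => y _; rewrite !inE; case: (y \in S); case: (e v y).
Qed.

Lemma deg_ge1 (S : {set T}) v y : y \in S -> e v y -> 1 <= deg S v.
Proof. by move=> yS vy; rewrite deg_card; apply/card_gt0P; exists y; rewrite inE yS vy. Qed.

Lemma deg_ge2 (S : {set T}) v y1 y2 : y1 \in S -> y2 \in S -> y1 != y2 ->
  e v y1 -> e v y2 -> 2 <= deg S v.
Proof.
move=> y1S y2S y12 vy1 vy2; rewrite deg_card; apply/card_gt1P.
by exists y1, y2; rewrite !inE y1S y2S vy1 vy2.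
Qed.

Lemma deg_ge3 (S : {set T}) v y1 y2 y3 : y1 \in S -> y2 \in S -> y3 \in S ->
  y1 != y2 -> y2 != y3 -> y3 != y1 -> e v y1 -> e v y2 -> e v y3 -> 3 <= deg S v.
Proof.
move=> y1S y2S y3S y12 y23 y31 vy1 vy2 vy3; rewrite deg_card; apply/card_gt2P.
by exists y1, y2, y3; rewrite !inE y1S y2S y3S vy1 vy2 vy3.
Qed.

Lemma grow_vertex (S : {set T}) v k : v \notin S -> k <= deg S v ->
  #|v |: S| = #|S| + 1 /\ degsum S + 2 * k <= degsum (v |: S).
Proof. by move=> vS kv; rewrite cardsU1 vS degsum_setU1 // addnC; split => //; lia. Qed.

Hypothesis forbidden : forall (n : nat) (H : rel 'I_n),
  n < 25 -> simple_graph H -> 10 * n < 7 * num_edges H -> ~ contains_subgraph e H.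

Lemma sparse (S : {set T}) : #|S| < 25 -> 7 * degsum S <= 20 * #|S|.
Proof.
move=> small; rewrite leqNgt; apply/negP => dense.
pose f := @enum_val T (mem S).
pose H : rel 'I_#|S| := fun i j => e (f i) (f j).
have sH : symmetric H by move=> i j; rewrite /H e_sym.
have iH : irreflexive H by move=> i; rewrite /H e_irr.
have edgesH : 2 * num_edges H = degsum S.
  rewrite num_edges_double // /degsum [RHS]big_enum_val; apply: eq_bigr => i _.
  by rewrite /deg [RHS]big_enum_val.
apply: (forbidden small (conj sH iH)); first lia.
by exists f; split; first exact: enum_val_inj.
Qed.

Hypothesis no_bad_vertex : forall v, ~ bad_vertex e v.
Hypothesis no_bad_edge : forall u v, ~ bad_edge e u v.
Hypothesis no_bad_pair : forall u v, ~ bad_pair e u v.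
Hypothesis no_small_component : forall x, ~ small_component e x.

Lemma edge_triangle u v : e u v -> exists w, e u w /\ e v w.
Proof.
move=> uv; apply: NNPP => none; apply: (no_bad_edge (u := u) (v := v)).
by split => // [[w /andP [uw vw]]]; apply: none; exists w.
Qed.

Definition closed (S : {set T}) := forall u v, u \in S -> e u v -> v \in S.

Definition locked (S : {set T}) (p q : T) :=
  forall b c, b \in S -> c \in S -> e p b -> e p c -> e b c -> b = q \/ c = q.

Lemma no_locked_pair (S : {set T}) p q : closed S -> p \in S -> q \in S -> p != q ->
  locked S p q -> locked S q p -> False.
Proof.
move=> clS pS qS pq lpq lqp.
have avoid r s : r \in S -> locked S r s -> ~ tri_with_without e r s.
  move=> rS lrs [b [c /and5P [rb rc bc bs cs]]].
  case: (lrs b c (clS _ _ rS rb) (clS _ _ rS rc) rb rc bc) => eq.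
    by rewrite eq eqxx in bs.
  by rewrite eq eqxx in cs.
by apply: (no_bad_pair (u := p) (v := q)); split => //; split; apply: avoid.
Qed.

Definition nbrs_in (S : {set T}) (v : T) (s : seq T) :=
  forall y, y \in S -> e v y -> y \in s.

Lemma nbrs_inPn (S : {set T}) v s : ~ nbrs_in S v s ->
  exists y, [/\ y \in S, e v y & y \notin s].
Proof.
move=> notin; apply: NNPP => none; apply: notin => y yS vy.
by apply: NNPP => ys; apply: none; exists y; split => //; apply/negP.
Qed.

Lemma nbrs_in_nonadj (S : {set T}) v s y : nbrs_in S v s -> y \in S -> y \notin s -> ~~ e v y.
Proof. by move=> Nv yS ys; apply/negP => vy; rewrite (Nv y yS vy) in ys. Qed.

Lemma independent_locked (S : {set T}) p q s : nbrs_in S p (q :: s) ->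
  {in s &, forall y y', ~~ e y y'} -> locked S p q.
Proof.
move=> Np indep b c bS cS pb pc bc.
move: (Np b bS pb) (Np c cS pc); rewrite !inE => /orP [/eqP ->|bs]; first by left.
case/orP => [/eqP ->|cs]; first by right.
by rewrite (negbTE (indep b c bs cs)) in bc.
Qed.

Definition free_pair (S : {set T}) := exists p q r,
  [/\ p \in S, q \in S, p != q, nbrs_in S p [:: q; r] & nbrs_in S q [:: p; r]].

(* a free pair is locked both ways, so a closed set has none *)
Lemma closed_free_pair (S : {set T}) : closed S -> free_pair S -> False.
Proof.
move=> clS [p [q [r [pS qS pq Np Nq]]]].
have single y y' : y \in [:: r] -> y' \in [:: r] -> ~~ e y y'.
  by rewrite !inE => /eqP -> /eqP ->; rewrite e_irr.
exact: (no_locked_pair clS pS qS pq (independent_locked Np single)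
                                    (independent_locked Nq single)).
Qed.

Lemma nonclosed_triangle (S : {set T}) : ~ closed S ->
  exists u v z, [/\ u \in S, v \notin S, e u v, e u z & e v z].
Proof.
move=> nclS; apply: NNPP => none; apply: nclS => u v uS uv.
apply: NNPP => vS; have [z [uz vz]] := edge_triangle uv.
by apply: none; exists u, v, z; split => //; apply/negP.
Qed.

Definition in_comp (x : T) (S : {set T}) := forall y, y \in S -> connect e x y.

Lemma in_compU1 x (S : {set T}) u v : in_comp x S -> u \in S -> e u v -> in_comp x (v |: S).
Proof.
move=> xS uS uv y; rewrite in_setU1 => /orP [/eqP ->|/xS //].
exact: connect_trans (xS u uS) (connect1 uv).
Qed.

Lemma closed_connect (S : {set T}) x y : closed S -> x \in S -> connect e x y -> y \in S.
Proof.
move=> clS + /connectP [p xp ->]; elim: p x xp => [|w p IH] x //= /andP [xw wp] xS.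
exact: IH wp (clS x w xS xw).
Qed.

Lemma component_eq x (S : {set T}) a : closed S -> a \in S -> connect e x a ->
  in_comp x S -> component e x = S.
Proof.
move=> clS aS xa xS; apply/setP => y; rewrite inE; apply/idP/idP; last exact: xS.
by apply: closed_connect => //; apply: (closed_connect clS aS); rewrite sym_connect_sym.
Qed.

Lemma inside_extension (S : {set T}) u v z : u \in S -> z \in S -> v \notin S ->
  e u v -> e u z -> e v z ->
  [/\ #|v |: S| = #|S| + 1, degsum S + 4 <= degsum (v |: S) &
      nbrs_in S v [:: u; z] \/ degsum S + 6 <= degsum (v |: S)].
Proof.
move=> uS zS vS uv uz vz; have uz' := edge_neq uz.
have [sz grow] := grow_vertex vS (deg_ge2 uS zS uz' (edge_sym uv) vz).
split => //; case: (classic (nbrs_in S v [:: u; z])) => [|/nbrs_inPn [y [yS vy]]]; first by left.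
rewrite !inE negb_or => /andP [yu yz]; right.
have zy : z != y by rewrite eq_sym.
have [_ grow3] := grow_vertex vS (deg_ge3 uS zS yS uz' zy yu (edge_sym uv) vz vy).
by clear -grow3; lia.
Qed.

Definition pendant (S : {set T}) u v z := nbrs_in S v [:: u] /\ nbrs_in S z [:: u].

Lemma extra_nbr (S : {set T}) v u : u \in S -> e v u -> ~ nbrs_in S v [:: u] -> 2 <= deg S v.
Proof.
move=> uS vu /nbrs_inPn [y [yS vy yu]].
have uy : u != y by rewrite eq_sym; rewrite inE in yu.
exact: deg_ge2 uS yS uy vu vy.
Qed.

Lemma outside_extension (S : {set T}) u v z : u \in S -> v \notin S -> z \notin S ->
  e u v -> e u z -> e v z ->
  [/\ #|z |: (v |: S)| = #|S| + 2, degsum S + 6 <= degsum (z |: (v |: S)) &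
      pendant S u v z \/ degsum S + 8 <= degsum (z |: (v |: S))].
Proof.
move=> uS vS zS uv uz vz.
have zvS : z \notin v |: S by rewrite in_setU1 negb_or eq_sym (edge_neq vz) zS.
rewrite degsum_setU1 // degsum_setU1 // deg_setU1 // (edge_sym vz) !cardsU1 zvS vS /=.
have dv := deg_ge1 uS (edge_sym uv); have dz := deg_ge1 uS (edge_sym uz).
split; [lia | lia |].
case: (classic (nbrs_in S v [:: u])) => Nv; last by have := extra_nbr uS (edge_sym uv) Nv; lia.
case: (classic (nbrs_in S z [:: u])) => Nz; last by have := extra_nbr uS (edge_sym uz) Nz; lia.
by left.
Qed.

Lemma pendant_free_pair (S : {set T}) u v z : e v z -> pendant S u v z ->
  free_pair (z |: (v |: S)).
Proof.
move=> vz [Nv Nz]; exists v, z, u; split; rewrite ?inE ?eqxx ?orbT ?(edge_neq vz) //.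
- move=> y; rewrite !inE => /or3P [/eqP ->|/eqP ->|yS] vy; rewrite ?eqxx //.
    by rewrite e_irr in vy.
  by move: (Nv y yS vy); rewrite inE => ->; rewrite orbT.
- move=> y; rewrite !inE => /or3P [/eqP ->|/eqP ->|yS] zy; rewrite ?eqxx //.
    by rewrite e_irr in zy.
  by move: (Nz y yS zy); rewrite inE => ->; rewrite orbT.
Qed.

(* Density invariants: a rich set has at least 3(|S|-1)/2 edges, a set with
   surplus at least (10|S|-3)/7 edges. *)
Definition rich (S : {set T}) := 21 * #|S| <= 7 * degsum S + 21.
Definition surplus (S : {set T}) := 20 * #|S| <= 7 * degsum S + 6.

(* If every small non-closed set satisfying [P] can be grown by two vertices
   into a set satisfying [P] with a free pair, then no such set with a free
   pair exists: a closed one would contain a bad pair, and growing beyond 21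
   vertices contradicts sparsity. *)
Lemma growth_false (P : {set T} -> Prop) :
  (forall S, P S -> rich S -> #|S| <= 21 -> ~ closed S ->
     exists S', [/\ P S', rich S', #|S'| = #|S| + 2 & free_pair S']) ->
  forall S, P S -> rich S -> #|S| <= 23 -> free_pair S -> False.
Proof.
move=> step S; move: {2}(24 - #|S|) (leqnn (24 - #|S|)) => k.
elim: k S => [|k IH] S bound PS rS small fS; first lia.
have sp : 7 * degsum S <= 20 * #|S| by apply: sparse; lia.
case: (leqP 22 #|S|) => [big|mid]; first by rewrite /rich in rS; lia.
case: (classic (closed S)) => [clS|nclS]; first exact: closed_free_pair clS fS.
have [S' [PS' rS' sz fS']] := step S PS rS mid nclS.
by apply: (IH S') => //; lia.
Qed.

(* with surplus, leaving [S] along a triangle either is too dense or adds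
   a pendant triangle, which keeps the surplus and the richness *)
Lemma surplus_step (S : {set T}) : surplus S -> rich S -> #|S| <= 21 -> ~ closed S ->
  exists S', [/\ surplus S', rich S', #|S'| = #|S| + 2 & free_pair S'].
Proof.
rewrite /surplus /rich => sS rS small nclS.
have [u [v [z [uS vS uv uz vz]]]] := nonclosed_triangle nclS.
case: (boolP (z \in S)) => zS.
  have [sz grow _] := inside_extension uS zS vS uv uz vz.
  by have := sparse (S := v |: S); lia.
have [sz grow [pend|dense]] := outside_extension uS vS zS uv uz vz.
  exists (z |: (v |: S)); rewrite /surplus /rich sz.
  by split; [lia | lia | done | exact: pendant_free_pair pend].
by have := sparse (S := z |: (v |: S)); lia.
Qed.

Lemma surplus_closed (S : {set T}) : surplus S -> rich S -> #|S| <= 21 -> closed S.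
Proof.
move=> sS rS small; apply: NNPP => nclS.
have [S' [sS' rS' sz fS']] := surplus_step sS rS small nclS.
by apply: (growth_false surplus_step sS' rS') => //; lia.
Qed.

(* Around [x] no edge lies in two triangles (the component of [x] contains no
   diamond). *)
Definition unique_triangles (x : T) := forall p q r r', connect e x p ->
  e p q -> e p r -> e q r -> e p r' -> e q r' -> r = r'.

Definition triangulated (S : {set T}) := forall p q, p \in S -> q \in S -> e p q ->
  exists2 w, w \in S & e p w && e q w.

(* Without diamonds, a vertex outside a rich set [S] attached through a
   triangle cannot have a second neighbour in [S]: the triangle on that extra
   edge would make a too dense set of at most 3 more vertices. *)
Lemma extra_nbr_false x (S : {set T}) u v z y : unique_triangles x -> in_comp x S ->
  rich S -> #|S| <= 21 -> u \in S -> v \notin S -> z \notin S ->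
  e u v -> e u z -> e v z -> y \in S -> y != u -> e v y -> False.
Proof.
rewrite /rich => uniqT xS rS small uS vS zS uv uz vz yS yu vy.
have xu := xS u uS.
have [t [vt yt]] := edge_triangle vy.
have [tu|tu] := eqVneq t u.
  rewrite tu in vt yt.
  have zy := uniqT u v z y xu uv uz vz (edge_sym yt) vy.
  by rewrite zy yS in zS.
have [tz|tz] := eqVneq t z.
  rewrite tz in vt yt.
  have uy := uniqT v z u y (connect_trans xu (connect1 uv)) vz (edge_sym uv)
               (edge_sym uz) vy (edge_sym yt).
  by rewrite uy eqxx in yu.
have uy : u != y by rewrite eq_sym.
case: (boolP (t \in S)) => tS.
  have [sz grow] := grow_vertex vS (deg_ge3 uS yS tS uy (edge_neq yt) tu (edge_sym uv) vy vt).
  have := sparse (S := v |: S); clear -rS small sz grow; lia.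
have zvS : z \notin v |: S by rewrite in_setU1 negb_or eq_sym (edge_neq vz) zS.
have tzvS : t \notin z |: (v |: S).
  by rewrite !in_setU1 !negb_or tz eq_sym (edge_neq vt) tS.
have [s1 d1] := grow_vertex vS (deg_ge2 uS yS uy (edge_sym uv) vy).
have [s2 d2] := grow_vertex zvS (deg_ge2 (y1 := u) (y2 := v) (setU1r _ uS) (setU11 _ _)
                  (edge_neq uv) (edge_sym uz) (edge_sym vz)).
have [s3 d3] := grow_vertex tzvS (deg_ge2 (y1 := v) (y2 := y) (setU1r _ (setU11 _ _))
                  (setU1r _ (setU1r _ yS)) (edge_neq vy) (edge_sym vt) (edge_sym yt)).
have := sparse (S := t |: (z |: (v |: S))); clear -rS small s1 s2 s3 d1 d2 d3; lia.
Qed.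

Lemma pendant_triangulated (S : {set T}) u v z : triangulated S -> u \in S ->
  e u v -> e u z -> e v z -> pendant S u v z -> triangulated (z |: (v |: S)).
Proof.
move=> triS uS uv uz vz [Nv Nz].
have only_u w y : nbrs_in S w [:: u] -> y \in S -> e w y -> y = u.
  by move=> Nw yS wy; move: (Nw y yS wy); rewrite inE => /eqP.
have inS' w : w \in S -> w \in z |: (v |: S) by move=> wS; rewrite !in_setU1 wS !orbT.
have zS' : z \in z |: (v |: S) by rewrite setU11.
have vS' : v \in z |: (v |: S) by rewrite setU1r ?setU11.
move=> p q; rewrite !in_setU1 => /or3P [/eqP ->|/eqP ->|pS] /or3P [/eqP ->|/eqP ->|qS] pq.
- by rewrite e_irr in pq.
- by exists u; rewrite ?inS' // (edge_sym uz) (edge_sym uv).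
- by rewrite (only_u z q Nz qS pq); exists v; rewrite // (edge_sym vz) uv.
- by exists u; rewrite ?inS' // (edge_sym uv) (edge_sym uz).
- by rewrite e_irr in pq.
- by rewrite (only_u v q Nv qS pq); exists z; rewrite // vz uz.
- by rewrite (only_u z p Nz pS (edge_sym pq)); exists v; rewrite // uv (edge_sym vz).
- by rewrite (only_u v p Nv pS (edge_sym pq)); exists z; rewrite // uz vz.
- by have [w wS pqw] := triS p q pS qS pq; exists w; rewrite ?inS'.
Qed.

(* without diamonds, leaving a triangulated set along a triangle always adds
   a pendant triangle *)
Lemma unique_step x (S : {set T}) : unique_triangles x ->
  triangulated S /\ in_comp x S -> rich S -> #|S| <= 21 -> ~ closed S ->
  exists S', [/\ triangulated S' /\ in_comp x S', rich S', #|S'| = #|S| + 2 & free_pair S'].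
Proof.
move=> uniqT [triS xS] rS small nclS.
have [u [v [z [uS vS uv uz vz]]]] := nonclosed_triangle nclS.
have zS : z \notin S.
  apply/negP => zS; have [w wS /andP [uw zw]] := triS u z uS zS uz.
  have vw := uniqT u z v w (xS u uS) uz uv (edge_sym vz) uw zw.
  by rewrite vw wS in vS.
have Nv : nbrs_in S v [:: u].
  apply: NNPP => /nbrs_inPn [y [yS vy yu]]; rewrite inE in yu.
  exact: extra_nbr_false uniqT xS rS small uS vS zS uv uz vz yS yu vy.
have Nz : nbrs_in S z [:: u].
  apply: NNPP => /nbrs_inPn [y [yS zy yu]]; rewrite inE in yu.
  exact: extra_nbr_false uniqT xS rS small uS zS vS uz uv (edge_sym vz) yS yu zy.
have [sz grow _] := outside_extension uS vS zS uv uz vz.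
exists (z |: (v |: S)); split => //.
- split; first exact: pendant_triangulated triS uS uv uz vz (conj Nv Nz).
  by apply: in_compU1 (in_compU1 xS uS uv) _ uz; rewrite setU1r.
- by rewrite /rich sz; rewrite /rich in rS; lia.
- exact: pendant_free_pair vz (conj Nv Nz).
Qed.

(* The growth process started from a triangle at [x] never stops, which is
   impossible: so the component of every vertex contains a diamond. *)
Lemma unique_triangles_false x : unique_triangles x -> False.
Proof.
move=> uniqT.
have [b [c /and3P [xb xc bc]]] : in_triangle e x by apply: NNPP; apply: no_bad_vertex.
have bx : b \notin [set x] by rewrite inE eq_sym (edge_neq xb).
have cx : c \notin [set x] by rewrite inE eq_sym (edge_neq xc).
have pend : pendant [set x] x b c by split => y; rewrite !inE => -> _.
have [sz grow _] := outside_extension (set11 x) bx cx xb xc bc.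
apply: (growth_false (P := fun S => triangulated S /\ in_comp x S)
          (fun S => @unique_step x S uniqT) (S := c |: (b |: [set x]))).
- have xx : in_comp x [set x] by move=> y; rewrite inE => /eqP ->.
  split; last exact: in_compU1 (in_compU1 xx (set11 x) xb) (setU1r b (set11 x)) xc.
  apply: (pendant_triangulated _ (set11 x) xb xc bc pend) => p q.
  by rewrite !inE => /eqP -> /eqP ->; rewrite e_irr.
- by rewrite /rich sz cards1; lia.
- by rewrite sz cards1.
- exact: pendant_free_pair bc pend.
Qed.

(* The diamond: triangles [a b c] and [a b d] on the spine [a b], with
   distinct non-adjacent tips [c] and [d]. *)
Definition diamond (a b c d : T) :=
  [&& e a b, e a c, e b c, e a d & [&& e b d, c != d & ~~ e c d]].

Local Notation diamond_set a b c d := (a |: (b |: (c |: [set d]))).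

Lemma diamond_swap_spine a b c d : diamond a b c d -> diamond b a c d.
Proof.
case/and5P => ab ac bc ad /and3P [bd cd ncd].
by rewrite /diamond (edge_sym ab) bc ac bd ad cd ncd.
Qed.

Lemma diamond_swap_tips a b c d : diamond a b c d -> diamond a b d c.
Proof.
case/and5P => ab ac bc ad /and3P [bd cd ncd].
by rewrite /diamond ab ad bd ac bc eq_sym cd e_sym ncd.
Qed.

Lemma diamond_set_swap_spine (a b c d : T) : diamond_set a b c d = diamond_set b a c d.
Proof. exact: setUCA. Qed.

Lemma diamond_set_swap_tips (a b c d : T) : diamond_set a b c d = diamond_set a b d c.
Proof. by rewrite [c |: _]setUC. Qed.

(* two triangles on an edge form a diamond: the tips cannot be adjacent, as
   a K4 is too dense *)
Lemma diamond_facts a b c d : e a b -> e a c -> e b c -> e a d -> e b d -> c != d ->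
  [/\ diamond a b c d, #|diamond_set a b c d| = 4 & 10 <= degsum (diamond_set a b c d)].
Proof.
move=> ab ac bc ad bd cd.
have c_out : c \notin [set d] by rewrite inE.
have b_out : b \notin c |: [set d] by rewrite !inE negb_or (edge_neq bc) (edge_neq bd).
have a_out : a \notin b |: (c |: [set d]).
  by rewrite !inE !negb_or (edge_neq ab) (edge_neq ac) (edge_neq ad).
have cdeg : e c d <= deg [set d] c by rewrite /deg big_set1.
have [s1 d1] := grow_vertex c_out cdeg.
have [s2 d2] := grow_vertex b_out (deg_ge2 (setU11 c _) (setU1r c (set11 d)) cd bc bd).
have [s3 d3] := grow_vertex a_out (deg_ge3 (setU11 b _) (setU1r b (setU11 c _))
  (setU1r b (setU1r c (set11 d))) (edge_neq bc) cd (edge_neq (edge_sym bd)) ab ac ad).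
have d0 : degsum [set d] = 0 by rewrite /degsum /deg !big_set1 e_irr.
rewrite cards1 in s1.
have ncd : ~~ e c d.
  apply/negP => cdE; rewrite cdE /= in d1.
  by have := sparse (S := diamond_set a b c d); clear -s1 s2 s3 d0 d1 d2 d3; lia.
by rewrite /diamond ab ac bc ad bd cd ncd; split => //; clear -s1 s2 s3 d0 d1 d2 d3; lia.
Qed.

Ltac edge_value := match goal with
  | |- e ?p ?q = _ => first
      [ by rewrite e_irr
      | have -> : e p q by first [done | rewrite e_sym]
      | have -> : e p q = false by apply/negbTE; first [done | rewrite e_sym] ]
  end; done.

Ltac edge_contra := match goal with
  | H : is_true (e ?p ?p) |- _ => by rewrite e_irr in H
  | H : is_true (e ?p ?q), N : is_true (~~ e ?p ?q) |- _ => by rewrite H in N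
  | H : is_true (e ?p ?q), N : is_true (~~ e ?q ?p) |- _ => by rewrite e_sym H in N
  end.

Ltac mem_cases y H :=
  rewrite ?inE in H; repeat (case/orP: H => H); move/eqP: H => H; subst y.

Lemma induced_iso_seq n (H : rel 'I_n) (C : {set T}) (s : seq T) (x0 : T) :
  size s = n -> uniq s -> C =i s ->
  (forall i j : 'I_n, e (nth x0 s i) (nth x0 s j) = H i j) -> induced_iso e C H.
Proof.
move=> sz us Cs eH; exists (fun i => nth x0 s i); split; [|split] => //.
- by move=> i j /eqP; rewrite nth_uniq ?sz // => /eqP /val_inj.
- move=> y; rewrite Cs; split => [ys|[i <-]]; last by rewrite mem_nth ?sz.
  have lt : index y s < n by rewrite -sz index_mem.
  by exists (Ordinal lt); rewrite nth_index.
Qed.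

Lemma side_attach_TT (C : {set T}) a b c d v : diamond a b c d ->
  C = v |: diamond_set a b c d -> v \notin diamond_set a b c d ->
  e v a -> e v c -> ~~ e v b -> ~~ e v d -> induced_iso e C TT.
Proof.
case/and5P => ab ac bc ad /and3P [bd cd ncd] -> vD va vc nvb nvd.
move: vD; rewrite !inE !negb_or => /and4P [va' vb' vc' vd'].
move: (edge_neq ab) (edge_neq ac) (edge_neq bc) (edge_neq ad) (edge_neq bd).
move=> nab nac nbc nad nbd.
apply: (induced_iso_seq (s := [:: d; b; a; c; v]) (x0 := v)) => //.
- by rewrite /= !inE !negb_or; repeat (apply/andP; split); first [done | rewrite eq_sym].
- by move=> y; rewrite !inE; do !case: (_ == _).
- by move=> [[|[|[|[|[|i]]]]] hi] [[|[|[|[|[|j]]]]] hj] //=; edge_value.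
Qed.

(* a diamond with one more vertex avoiding both tips: the spine is a bad pair *)
Lemma spine_attach_false (C : {set T}) a b c d v : diamond a b c d -> closed C ->
  C = v |: diamond_set a b c d -> ~~ e v c -> ~~ e v d -> False.
Proof.
move=> D clC Ceq nvc nvd.
have lock p q : diamond p q c d -> C = v |: diamond_set p q c d -> locked C p q.
  case/and5P => pq pc qc pd /and3P [qd cd ncd] ->.
  apply: (independent_locked (s := [:: c; d; v])).
    move=> y yC py; mem_cases y yC; rewrite ?inE ?eqxx ?orbT //; edge_contra.
  move=> y y' yl y'l; mem_cases y yl; mem_cases y' y'l;
    first [by rewrite e_irr | done | by rewrite e_sym].
case/and5P: (D) => ab _ _ _ _.
apply: (no_locked_pair clC _ _ (edge_neq ab) (lock a b D Ceq)).
- by rewrite Ceq !inE eqxx !orbT.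
- by rewrite Ceq !inE eqxx !orbT.
- by apply: lock (diamond_swap_spine D) _; rewrite Ceq diamond_set_swap_spine.
Qed.

Lemma center_attach_DD (C : {set T}) a b c d v z w : diamond a b c d ->
  C = w |: (z |: (v |: diamond_set a b c d)) ->
  v \notin diamond_set a b c d -> z \notin v |: diamond_set a b c d ->
  w \notin z |: (v |: diamond_set a b c d) ->
  e a v -> e a z -> e a w -> e v z -> e v w -> ~~ e z w ->
  {in [:: v; z; w], forall y, [&& ~~ e y b, ~~ e y c & ~~ e y d]} -> induced_iso e C DD.
Proof.
case/and5P => ab ac bc ad /and3P [bd cd ncd] -> vD zD wD av az aw vz vw nzw off.
move: (off v) (off z) (off w); rewrite !inE !eqxx /= ?orbT.
move=> /(_ isT) /and3P [nvb nvc nvd] /(_ isT) /and3P [nzb nzc nzd].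
move=> /(_ isT) /and3P [nwb nwc nwd].
move: vD zD wD; rewrite !inE !negb_or => /and4P [va vb vc vd] /and5P [zv za zb zc zd].
case/and3P=> [wz wv /and4P [wa wb wc wd]].
move: (edge_neq ab) (edge_neq ac) (edge_neq bc) (edge_neq ad) (edge_neq bd).
move=> nab nac nbc nad nbd.
apply: (induced_iso_seq (s := [:: a; b; c; d; v; z; w]) (x0 := a)) => //.
- by rewrite /= !inE !negb_or; repeat (apply/andP; split); first [done | rewrite eq_sym].
- by move=> y; rewrite !inE; do !case: (_ == _).
- by move=> [[|[|[|[|[|[|[|i]]]]]]] hi] [[|[|[|[|[|[|[|j]]]]]]] hj] //=; edge_value.
Qed.

(* three more vertices avoiding the spine: the spine is a bad pair *)
Lemma tip_attach_false (C : {set T}) a b c d v z w : diamond a b c d -> closed C ->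
  C = w |: (z |: (v |: diamond_set a b c d)) ->
  {in [:: v; z; w], forall y, ~~ e y a && ~~ e y b} -> False.
Proof.
move=> D clC Ceq off.
have lock p q : diamond p q c d -> C = w |: (z |: (v |: diamond_set p q c d)) ->
    {in [:: v; z; w], forall y, ~~ e y p} -> locked C p q.
  case/and5P => pq pc qc pd /and3P [qd cd ncd] -> offp.
  move: (offp v) (offp z) (offp w); rewrite !inE !eqxx /= ?orbT.
  move=> /(_ isT) nvp /(_ isT) nzp /(_ isT) nwp.
  apply: (independent_locked (s := [:: c; d])).
    move=> y yC py; mem_cases y yC; rewrite ?inE ?eqxx ?orbT //; edge_contra.
  move=> y y' yl y'l; mem_cases y yl; mem_cases y' y'l;
    first [by rewrite e_irr | done | by rewrite e_sym].
case/and5P: (D) => ab _ _ _ _.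
apply: (no_locked_pair clC _ _ (edge_neq ab) (lock a b D Ceq _)).
- by rewrite Ceq !inE eqxx !orbT.
- by rewrite Ceq !inE eqxx !orbT.
- by move=> y /off /andP [].
- apply: lock (diamond_swap_spine D) _ _; first by rewrite Ceq diamond_set_swap_spine.
  by move=> y /off /andP [].
Qed.

Ltac side_conditions off := first [ done | by rewrite e_sym
  | by apply: off; first [done | by rewrite eq_sym | by rewrite !inE eqxx ?orbT]].

Lemma one_vertex_finish (C : {set T}) a b c d u z v : diamond a b c d -> closed C ->
  C = v |: diamond_set a b c d -> v \notin diamond_set a b c d ->
  u \in diamond_set a b c d -> z \in diamond_set a b c d -> e u z -> e v u -> e v z ->
  nbrs_in (diamond_set a b c d) v [:: u; z] -> induced_iso e C TT.
Proof.
move=> D clC Ceq vD uD zD uz vu vz Nv.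
have off y : y \in diamond_set a b c d -> y != u -> y != z -> ~~ e v y.
  by move=> yD yu yz; apply: (nbrs_in_nonadj Nv yD); rewrite !inE negb_or yu yz.
case/and5P: (D) => ab ac bc ad /and3P [bd cd ncd].
move: (edge_neq ab) (edge_neq ac) (edge_neq bc) (edge_neq ad) (edge_neq bd).
move=> nab nac nbc nad nbd.
have Ds := diamond_swap_spine D; have Dt := diamond_swap_tips D.
have Dst := diamond_swap_tips Ds.
have Cs : C = v |: diamond_set b a c d by rewrite Ceq diamond_set_swap_spine.
have Ct : C = v |: diamond_set a b d c by rewrite Ceq diamond_set_swap_tips.
have Cst : C = v |: diamond_set b a d c by rewrite Cs diamond_set_swap_tips.
have vDs : v \notin diamond_set b a c d by rewrite -diamond_set_swap_spine.
have vDt : v \notin diamond_set a b d c by rewrite -diamond_set_swap_tips.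
have vDst : v \notin diamond_set b a d c by rewrite -diamond_set_swap_tips.
mem_cases u uD; mem_cases z zD; try edge_contra.
(* the remaining cases are an edge [u z] of the diamond, up to its symmetries *)
all: first
  [ exfalso; apply: (spine_attach_false D clC Ceq); side_conditions off
  | apply: (side_attach_TT D Ceq vD); side_conditions off
  | apply: (side_attach_TT Dt Ct vDt); side_conditions off
  | apply: (side_attach_TT Ds Cs vDs); side_conditions off
  | apply: (side_attach_TT Dst Cst vDst); side_conditions off ].
Qed.

(* the same with three extra vertices [v z w] hanging at [u]: if [u] is on
   the spine the component is DD, otherwise the spine is a bad pair *)
Lemma three_vertex_finish (C : {set T}) a b c d u v z w : diamond a b c d -> closed C ->
  C = w |: (z |: (v |: diamond_set a b c d)) ->
  v \notin diamond_set a b c d -> z \notin v |: diamond_set a b c d ->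
  w \notin z |: (v |: diamond_set a b c d) -> u \in diamond_set a b c d ->
  e u v -> e u z -> e u w -> e v z -> e v w -> ~~ e z w ->
  nbrs_in (diamond_set a b c d) v [:: u] -> nbrs_in (diamond_set a b c d) z [:: u] ->
  nbrs_in (diamond_set a b c d) w [:: u] -> induced_iso e C DD.
Proof.
move=> D clC Ceq vD zD wD uD uv uz uw vz vw nzw Nv Nz Nw.
have off y : y \in diamond_set a b c d -> y != u ->
    [&& ~~ e v y, ~~ e z y & ~~ e w y].
  move=> yD yu; have yu' : y \notin [:: u] by rewrite inE.
  by rewrite !(nbrs_in_nonadj _ yD yu').
case/and5P: (D) => ab ac bc ad /and3P [bd cd ncd].
move: (edge_neq ab) (edge_neq ac) (edge_neq bc) (edge_neq ad) (edge_neq bd).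
move=> nab nac nbc nad nbd.
have offs p q r : p \in diamond_set a b c d -> q \in diamond_set a b c d ->
    r \in diamond_set a b c d -> [&& p != u, q != u & r != u] ->
    {in [:: v; z; w], forall y, [&& ~~ e y p, ~~ e y q & ~~ e y r]}.
  move=> pD qD rD /and3P [pu qu ru] y yl.
  move: (off p pD pu) (off q qD qu) (off r rD ru).
  move=> /and3P [vp zp wp] /and3P [vq zq wq] /and3P [vr zr wr].
  by mem_cases y yl; apply/and3P; split.
have aD : a \in diamond_set a b c d by rewrite setU11.
have bD : b \in diamond_set a b c d by rewrite !inE eqxx orbT.
have cD : c \in diamond_set a b c d by rewrite !inE eqxx !orbT.
have dD : d \in diamond_set a b c d by rewrite !inE eqxx !orbT.
mem_cases u uD.
- have bcd_a : [&& b != a, c != a & d != a] by rewrite !(eq_sym _ a) nab nac nad.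
  exact: (center_attach_DD D Ceq vD zD wD uv uz uw vz vw nzw (offs _ _ _ bD cD dD bcd_a)).
- have acd_b : [&& a != b, c != b & d != b] by rewrite nab !(eq_sym _ b) nbc nbd.
  have offb := offs _ _ _ aD cD dD acd_b.
  rewrite diamond_set_swap_spine in Ceq vD zD wD.
  exact: (center_attach_DD (diamond_swap_spine D) Ceq vD zD wD uv uz uw vz vw nzw offb).
- have ab_c : [&& a != c, b != c & b != c] by rewrite nac nbc.
  exfalso; apply: (tip_attach_false D clC Ceq) => y yl.
  by case/and3P: (offs a b b aD bD bD ab_c y yl) => -> ->.
- have ab_d : [&& a != d, b != d & b != d] by rewrite nad nbd.
  exfalso; apply: (tip_attach_false D clC Ceq) => y yl.
  by case/and3P: (offs a b b aD bD bD ab_d y yl) => -> ->.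
Qed.

Lemma pendant_locked (C S : {set T}) u v z w : C = w |: (z |: (v |: S)) ->
  nbrs_in S v [:: u] -> (e v w -> ~~ e u w) -> locked C v z.
Proof.
move=> -> Nv noU.
have Nv' y : y \in w |: (z |: (v |: S)) -> e v y -> [|| y == z, y == u | y == w].
  rewrite !in_setU1 => /or4P [/eqP ->|/eqP ->|/eqP ->|yS] vy; rewrite ?eqxx ?orbT //.
    by rewrite e_irr in vy.
  by move: (Nv y yS vy); rewrite inE => ->; rewrite orbT.
case: (boolP (e v w)) => vw.
- apply: (independent_locked (s := [:: u; w])) => [y yC vy|y y'].
    by rewrite !inE; apply: Nv'.
  rewrite !inE => /orP [] /eqP -> /orP [] /eqP ->; rewrite ?e_irr //; first exact: noU.
  by rewrite e_sym noU.
- apply: (independent_locked (s := [:: u])) => [y yC vy|y y'].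
    move: (Nv' y yC vy); rewrite !inE => /or3P [->|->|/eqP wy]; rewrite ?orbT //.
    by rewrite -wy vy in vw.
  by rewrite !inE => /eqP -> /eqP ->; rewrite e_irr.
Qed.

Lemma attach_through (S : {set T}) u v z w u' z' : v \notin S -> nbrs_in S v [:: u] ->
  nbrs_in (z |: (v |: S)) w [:: u'; z'] -> u' \in z |: (v |: S) -> z' \in z |: (v |: S) ->
  e u' w -> e u' z' -> e w z' -> e w v -> ~~ e w z -> e w u /\ nbrs_in S w [:: u].
Proof.
move=> vS Nv Nw u'S z'S u'w u'z' wz' wv nwz.
have common o : o \in z |: (v |: S) -> e v o -> e w o -> o = u.
  rewrite !in_setU1 => /or3P [/eqP ->|/eqP ->|oS] vo wo.
  - by rewrite wo in nwz.
  - by rewrite e_irr in vo.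
  - by move: (Nv o oS vo); rewrite inE => /eqP.
have only y : y \in S -> e w y -> y \in [:: u'; z'].
  by move=> yS; apply: Nw; rewrite !in_setU1 yS !orbT.
have vS1 : v \in z |: (v |: S) by rewrite setU1r ?setU11.
move: (Nw v vS1 wv); rewrite !inE => /orP [/eqP vu'|/eqP vz'].
- subst u'; have z'u := common z' z'S u'z' wz'; subst z'.
  split => // y yS wy; move: (only y yS wy); rewrite !inE => /orP [/eqP yv|//].
  by rewrite -yv yS in vS.
- subst z'; have u'u := common u' u'S (edge_sym u'z') (edge_sym u'w); subst u'.
  split => [|y yS wy]; first exact: edge_sym u'w.
  move: (only y yS wy); rewrite !inE => /orP [//|/eqP yv].
  by rewrite -yv yS in vS.
Qed.

Lemma last_vertex_finish (C : {set T}) a b c d u v z w u' z' : diamond a b c d ->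
  closed C -> C = w |: (z |: (v |: diamond_set a b c d)) ->
  u \in diamond_set a b c d -> v \notin diamond_set a b c d ->
  z \notin v |: diamond_set a b c d -> w \notin z |: (v |: diamond_set a b c d) ->
  e u v -> e u z -> e v z -> pendant (diamond_set a b c d) u v z ->
  u' \in z |: (v |: diamond_set a b c d) -> z' \in z |: (v |: diamond_set a b c d) ->
  e u' w -> e u' z' -> e w z' ->
  nbrs_in (z |: (v |: diamond_set a b c d)) w [:: u'; z'] -> induced_iso e C DD.
Proof.
move=> D clC Ceq uD vD zD wD uv uz vz [Nv Nz] u'S z'S u'w u'z' wz' Nw.
have C' : C = w |: (v |: (z |: diamond_set a b c d)) by rewrite Ceq [z |: _]setUCA.
have vC : v \in C by rewrite Ceq !in_setU1 eqxx !orbT.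
have zC : z \in C by rewrite Ceq !in_setU1 eqxx !orbT.
have zD0 : z \notin diamond_set a b c d by move: zD; rewrite in_setU1 negb_or => /andP [].
have vzD : v \notin z |: diamond_set a b c d by rewrite in_setU1 negb_or (edge_neq vz).
have wD' : w \notin v |: (z |: diamond_set a b c d) by rewrite [v |: _]setUCA.
(* if [w] sees both or neither of [v], [z], these two form a bad pair *)
have vz_pair : e w v = e w z -> (e w v -> ~~ e w u) -> False.
  move=> same noU; apply: (no_locked_pair clC vC zC (edge_neq vz)).
    by apply: (pendant_locked Ceq Nv) => vw; rewrite e_sym noU // e_sym.
  by apply: (pendant_locked C' Nz) => zw; rewrite e_sym noU // same e_sym.
case: (boolP (e w v)) => wv; case: (boolP (e w z)) => wz.
- exfalso; apply: vz_pair => [|_]; first by rewrite wv wz.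
  apply/negP => wu.
  have uS1 := setU1r z (setU1r v uD).
  have vS1 : v \in z |: (v |: diamond_set a b c d) by rewrite setU1r ?setU11.
  have zS1 : z \in z |: (v |: diamond_set a b c d) by rewrite setU11.
  move: (Nw u uS1 wu) (Nw v vS1 wv) (Nw z zS1 wz); rewrite !inE.
  move: (edge_neq uv) (edge_neq uz) (edge_neq vz) => /eqP nuv /eqP nuz /eqP nvz.
  by do 3 case/orP=> /eqP ?; congruence.
- have [wu Nw'] := attach_through vD Nv Nw u'S z'S u'w u'z' wz' wv wz.
  have nzw : ~~ e z w by rewrite e_sym.
  exact: (three_vertex_finish D clC Ceq vD zD wD uD uv uz (edge_sym wu) vz
            (edge_sym wv) nzw Nv Nz Nw').
- rewrite [z |: _]setUCA in Nw u'S z'S.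
  have [wu Nw'] := attach_through zD0 Nz Nw u'S z'S u'w u'z' wz' wz wv.
  have nvw : ~~ e v w by rewrite e_sym.
  exact: (three_vertex_finish D clC C' zD0 vzD wD' uD uz uv (edge_sym wu) (edge_sym vz)
            (edge_sym wz) nvw Nz Nv Nw').
- by exfalso; apply: vz_pair => [|wv']; [rewrite (negbTE wv) (negbTE wz) | rewrite wv' in wv].
Qed.

(* Growing the diamond [D] (a non-closed 4-set) along a triangle [u v z] with
   [u], [z] in [D]: [v] sees exactly [u], [z], and the 5-set has surplus, so
   it is the component, which is TT. *)
Lemma one_vertex_case x a b c d u v z : connect e x a -> diamond a b c d ->
  #|diamond_set a b c d| = 4 -> 10 <= degsum (diamond_set a b c d) ->
  in_comp x (diamond_set a b c d) ->
  u \in diamond_set a b c d -> z \in diamond_set a b c d -> v \notin diamond_set a b c d ->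
  e u v -> e u z -> e v z -> induced_iso e (component e x) TT.
Proof.
move=> xa D sz0 d0 xD uD zD vD uv uz vz.
have [sz1 d1 [Nv|dense]] := inside_extension uD zD vD uv uz vz; last first.
  by have := sparse (S := v |: diamond_set a b c d); clear -sz0 d0 sz1 dense; lia.
have clS : closed (v |: diamond_set a b c d).
  by apply: surplus_closed; rewrite /surplus /rich sz1; clear -sz0 d0 d1; lia.
rewrite (component_eq clS (setU1r v (setU11 a _)) xa (in_compU1 xD uD uv)).
exact: (one_vertex_finish D clS erefl vD uD zD uz (edge_sym uv) vz Nv).
Qed.

(* Growing [D] along a triangle [u v z] with [v], [z] outside: [v z] is a
   pendant triangle, giving a 6-set [S1] with a free pair.  A triangle
   [u' w z'] leaving [S1] cannot have [z'] outside (the growth would go on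
   with surplus), so it adds one vertex [w] and yields the component, DD. *)
Lemma two_vertex_case x a b c d u v z : connect e x a -> diamond a b c d ->
  #|diamond_set a b c d| = 4 -> 10 <= degsum (diamond_set a b c d) ->
  in_comp x (diamond_set a b c d) ->
  u \in diamond_set a b c d -> v \notin diamond_set a b c d -> z \notin diamond_set a b c d ->
  e u v -> e u z -> e v z -> induced_iso e (component e x) DD.
Proof.
move=> xa D sz0 d0 xD uD vD zD uv uz vz.
have [sz1 d1 [pend|dense]] := outside_extension uD vD zD uv uz vz; last first.
  by have := sparse (S := z |: (v |: diamond_set a b c d)); clear -sz0 d0 sz1 dense; lia.
set S1 := z |: (v |: diamond_set a b c d) in sz1 d1 *.
have nclS1 : ~ closed S1 := fun clS1 => closed_free_pair clS1 (pendant_free_pair vz pend).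
have [u' [w [z' [u'S wS u'w u'z' wz']]]] := nonclosed_triangle nclS1.
case: (boolP (z' \in S1)) => z'S; last first.
  have [sz2 d2 [pend'|dense]] := outside_extension u'S wS z'S u'w u'z' wz'; last first.
    by have := sparse (S := z' |: (w |: S1)); clear -sz0 d0 sz1 d1 sz2 dense; lia.
  exfalso; apply: (closed_free_pair _ (pendant_free_pair wz' pend')).
  by apply: surplus_closed; rewrite /surplus /rich sz2 sz1; clear -sz0 d0 d1 d2; lia.
have [sz2 d2 [Nw|dense]] := inside_extension u'S z'S wS u'w u'z' wz'; last first.
  by have := sparse (S := w |: S1); clear -sz0 d0 sz1 d1 sz2 dense; lia.
have clC : closed (w |: S1).
  by apply: surplus_closed; rewrite /surplus /rich sz2 sz1; clear -sz0 d0 d1 d2; lia.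
have xS1 : in_comp x S1 := in_compU1 (in_compU1 xD uD uv) (setU1r v uD) uz.
have aC : a \in w |: S1 := setU1r w (setU1r z (setU1r v (setU11 a _))).
rewrite (component_eq clC aC xa (in_compU1 xS1 u'S u'w)).
have zvD : z \notin v |: diamond_set a b c d by rewrite in_setU1 negb_or eq_sym (edge_neq vz).
exact: (last_vertex_finish D clC erefl uD vD zvD wS uv uz vz pend u'S z'S u'w u'z' wz' Nw).
Qed.

(* Every component contains a diamond: otherwise no edge near [x] would lie
   in two triangles. *)
Lemma diamond_near x : exists a b c d,
  [/\ connect e x a, e a b, e a c, e b c & [/\ e a d, e b d & c != d]].
Proof.
apply: NNPP => none; apply: (unique_triangles_false (x := x)) => p q r r' xp pq pr qr pr' qr'.
apply: NNPP => rr'; apply: none; exists p, q, r, r'; split => //; split => //.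
exact/eqP.
Qed.

(* The component of [x] contains a diamond [D]; as [D] is no small component
   it is left by a triangle, with one or two new vertices. *)
Lemma component_TT_or_DD x :
  induced_iso e (component e x) TT \/ induced_iso e (component e x) DD.
Proof.
have [a [b [c [d [xa ab ac bc [ad bd cd]]]]]] := diamond_near x.
have [D sz0 d0] := diamond_facts ab ac bc ad bd cd.
have xD : in_comp x (diamond_set a b c d).
  move=> y; rewrite !inE => /or4P [] /eqP ->; first exact: xa.
  - exact: connect_trans xa (connect1 ab).
  - exact: connect_trans xa (connect1 ac).
  - exact: connect_trans xa (connect1 ad).
have nclD : ~ closed (diamond_set a b c d).
  move=> clD; apply: (no_small_component (x := x)).
  by rewrite /small_component (component_eq clD (setU11 a _) xa xD) sz0.
have [u [v [z [uD vD uv uz vz]]]] := nonclosed_triangle nclD.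
case: (boolP (z \in diamond_set a b c d)) => zD.
  by left; exact: one_vertex_case xa D sz0 d0 xD uD zD vD uv uz vz.
by right; exact: two_vertex_case xa D sz0 d0 xD uD vD zD uv uz vz.
Qed.

End StableGraph.

Unset Implicit Arguments.

Theorem mainTheorem19 (T : finType) (e : rel T) :
  simple_graph e ->
  K3_1_stable e ->
  (forall (n : nat) (H : rel 'I_n),
      n < 25 -> simple_graph H -> 10 * n < 7 * num_edges H ->
      ~ contains_subgraph e H) ->
  forall x : T, induced_iso e (component e x) TT \/ induced_iso e (component e x) DD.
Proof.
move=> [e_sym e_irr] [no_bad_vertex [no_bad_edge [no_bad_pair no_small]]] forbidden x.
exact: component_TT_or_DD.
Qed.
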